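(* Let $X,U$ be Banach spaces and $\mathcal{U}=PC(\mathbb{R}_+,U)$. Let $\{A(t)\}_{t\ge0}$ generate a strongly continuous evolution family $\{W(t,s)\}_{t\ge s\ge0}$. Let $B\in C(\mathbb{R}_+,L(U,X))$ with $\|B\|_\infty=\sup_t\|B(t)\|<\infty$. Let $\psi:\mathbb{R}_+\times X\times U\to X$, and consider $$\dot x=A(t)x+B(t)u+\psi(t,x,u),\quad x(t_0)=x_0. \tag{N}$$ Assume that $\Psi(t,x,u)=B(t)u+\psi(t,x,u)$ satisfies $(\mathcal{H}_1)$ and that $\psi$ satisfies $(\mathcal{H}_2)$. If the linear system $\dot x=A(t)x+B(t)u$ is 0-UGAS, then $$V(t,x)=\int_t^\infty\|W(\tau,t)x\|_X^2\,d\tau$$ is a non-coercive LISS Lyapunov function in implication form for (N).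
   Context: A strongly continuous evolution family generated by $\{A(t)\}$ satisfies: - $W(s,s)=I$ and $W(t,s)=W(t,r)W(r,s)$; - $(t,s)\mapsto W(t,s)x$ is continuous; - for $v\in D(A(s))$: $\partial_tW(t,s)v=A(t)W(t,s)v$ and $\partial_sW(t,s)v=-W(t,s)A(s)v$. $PC(\mathbb{R}_+,U)$ consists of bounded, right-continuous, piecewise continuous functions, with the sup norm $\|\cdot\|_{\mathcal{U}}$. $(\mathcal{H}_1)$: $\Psi$ is jointly continuous in $(t,u)$ and, for each $c,\tilde t\ge0$, Lipschitz in $x$ uniformly over $t\in[0,\tilde t]$ and $\|x\|,\|u\|\le c$. Under $(\mathcal{H}_1)$, (N) has unique maximal mild solutions $\phi(t,t_0,x_0,u)=W(t,t_0)x_0+\int_{t_0}^tW(t,s)\Psi(s,\phi(s),u(s))ds$. $(\mathcal{H}_2)$: for each $a>0$ there exist $b>0$ and $\rho>0$ such that $\|\psi(t,x,v)\|_X\le a\|x\|_X+b\|v\|_U$ for all $t\ge0$, $x\in X$ and $v\in U$ with $\|x\|_X,\|v\|_U\le\rho$. 0-UGAS of the linear system: there is $\beta\in\mathcal{KL}$ with $\|W(t,t_0)x_0\|\le\beta(\|x_0\|,t-t_0)$. Lie derivative: $\dot V_u(t,x)=\limsup_{h\to0^+}\frac1h(V(t+h,\phi(t+h,t,x,u))-V(t,x))$. Non-coercive LISS Lyapunov function in implication form. A continuous $V:\mathbb{R}_+\times D\to\mathbb{R}_+$ ($D\ni0$ open) with $V(t,0)=0$, for which there exist $\alpha_2\in\mathcal{K}_\infty$,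 $\kappa\in\mathcal{K}$, positive definite $\mu$ and $r_1,r_2>0$ with $\{\|x\|\le r_1\}\subset D$, such that: - $0<V(t,x)\le\alpha_2(\|x\|_X)$ for $x\in D\setminus\{0\}$ and $t\ge0$; - for all $t\ge0$, $\|x\|_X\le r_1$ and $u\in\mathcal{U}$ with $\|u\|_{\mathcal{U}}\le r_2$: $\|x\|_X\ge\kappa(\|u\|_{\mathcal{U}})$ implies $\dot V_u(t,x)\le-\mu(V(t,x))$. *)

From Stdlib Require Import Reals.
From Coquelicot Require Import Coquelicot.
Open Scope R_scope.

Section Defs.

Definition class_K (g : R -> R) : Prop :=
  g 0 = 0 /\
  (forall r, 0 <= r -> continuity_pt g r) /\
  (forall r s, 0 <= r -> r < s -> g r < g s).

Definition class_Kinf (g : R -> R) : Prop :=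
  class_K g /\ (forall M, exists r, 0 <= r /\ M < g r).

Definition class_KL (b : R -> R -> R) : Prop :=
  (forall t, 0 <= t -> class_K (fun r => b r t)) /\
  (forall r, 0 <= r ->
     (forall t s, 0 <= t -> t <= s -> b r s <= b r t) /\
     is_lim (fun t => b r t) p_infty 0).

Definition pos_def (m : R -> R) : Prop :=
  m 0 = 0 /\ (forall r, 0 <= r -> continuity_pt m r) /\
  (forall r, 0 < r -> 0 < m r).

Context {X U : CompleteNormedModule R_AbsRing}.

Definition PC_input (u : R -> U) : Prop :=
  (exists M, forall t, 0 <= t -> norm (u t) <= M) /\
  (forall t, 0 <= t -> filterlim u (at_right t) (locally (u t))) /\
  (* piecewise continuous: finitely many discontinuities on each bounded
     interval, and left limits exist *)
  (forall T, exists l : list R,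
     forall t, 0 <= t <= T -> ~ List.In t l -> continuous u t) /\
  (forall t, 0 < t -> exists y, filterlim u (at_left t) (locally y)).

Definition input_norm (u : R -> U) : R :=
  real (Lub_Rbar (fun r => exists t, 0 <= t /\ r = norm (u t))).

Definition evolution_family (DA : R -> X -> Prop) (A : R -> X -> X)
  (W : R -> R -> X -> X) : Prop :=
  (forall t, DA t zero /\
     (forall x y, DA t x -> DA t y -> DA t (plus x y) /\
                  A t (plus x y) = plus (A t x) (A t y)) /\
     (forall (k : R) x, DA t x -> DA t (scal k x) /\ A t (scal k x) = scal k (A t x))) /\
  (forall t s, 0 <= s <= t -> is_linear (W t s)) /\
  (forall s x, 0 <= s -> W s s x = x) /\
  (forall t r s x, 0 <= s -> s <= r -> r <= t -> W t s x = W t r (W r s x)) /\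
  (forall x t s, 0 <= s <= t ->
     filterlim (fun p : R * R => W (fst p) (snd p) x)
       (within (fun p : R * R => 0 <= snd p <= fst p) (locally (t, s)))
       (locally (W t s x))) /\
  (forall t s v, 0 <= s <= t -> DA s v ->
     DA t (W t s v) /\
     filterlim (fun h => scal (/ h) (minus (W (t + h) s v) (W t s v)))
       (within (fun h => h <> 0 /\ s <= t + h) (locally 0))
       (locally (A t (W t s v)))) /\
  (forall t s v, 0 <= s <= t -> DA s v ->
     filterlim (fun h => scal (/ h) (minus (W t (s + h) v) (W t s v)))
       (within (fun h => h <> 0 /\ 0 <= s + h <= t) (locally 0))
       (locally (opp (W t s (A s v))))).

Definition B_cont_bounded (B : R -> U -> X) : Prop :=
  (forall t, 0 <= t -> is_linear (B t)) /\
  (forall t, 0 <= t -> forall eps, 0 < eps -> exists delta, 0 < delta /\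
     forall s, 0 <= s -> Rabs (s - t) < delta ->
       forall v, norm (minus (B s v) (B t v)) <= eps * norm v) /\
  (exists M, forall t, 0 <= t -> forall v, norm (B t v) <= M * norm v).

Definition H1 (Psi : R -> X -> U -> X) : Prop :=
  (forall x t v, 0 <= t ->
     filterlim (fun p : R * U => Psi (fst p) x (snd p))
       (within (fun p : R * U => 0 <= fst p) (locally (t, v)))
       (locally (Psi t x v))) /\
  (forall c tt, 0 <= c -> 0 <= tt -> exists L, 0 <= L /\
     forall t x y v, 0 <= t <= tt -> norm x <= c -> norm y <= c -> norm v <= c ->
       norm (minus (Psi t x v) (Psi t y v)) <= L * norm (minus x y)).

Definition H2 (psi : R -> X -> U -> X) : Prop :=
  forall a, 0 < a -> exists b rho, 0 < b /\ 0 < rho /\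
    forall t x v, 0 <= t -> norm x <= rho -> norm v <= rho ->
      norm (psi t x v) <= a * norm x + b * norm v.

Definition zero_UGAS (W : R -> R -> X -> X) : Prop :=
  exists beta, class_KL beta /\
    forall t t0 x0, 0 <= t0 -> t0 <= t -> norm (W t t0 x0) <= beta (norm x0) (t - t0).

Definition mild_solution (W : R -> R -> X -> X) (Psi : R -> X -> U -> X)
  (t0 : R) (x0 : X) (u : R -> U) (T : R) (phi : R -> X) : Prop :=
  (forall tau, t0 <= tau < T ->
     filterlim phi (within (fun s => t0 <= s < T) (locally tau)) (locally (phi tau))) /\
  (forall tau, t0 <= tau < T ->
     is_RInt (fun s => W tau s (Psi s (phi s) (u s))) t0 tau
       (minus (phi tau) (W tau t0 x0))).

(* Lie derivative limsup_{h->0+} (V(t+h,phi(t+h)) - V(t,x))/h along a solution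
   phi defined on [t,T), as an extended real *)
Definition lie_derivative (V : R -> X -> R) (t : R) (x : X) (T : R)
  (phi : R -> X) : Rbar :=
  Glb_Rbar (fun y => exists delta, 0 < delta <= T - t /\
    y = Lub_Rbar (fun q => exists h, 0 < h < delta /\
          q = (V (t + h) (phi (t + h)) - V t x) / h)).

Definition nc_LISS_Lyapunov_impl (W : R -> R -> X -> X) (Psi : R -> X -> U -> X)
  (D : X -> Prop) (V : R -> X -> R) : Prop :=
  D zero /\
  (forall x, D x -> exists e, 0 < e /\ forall y, ball x e y -> D y) /\
  (forall t x, 0 <= t -> D x ->
     filterlim (fun p : R * X => V (fst p) (snd p))
       (within (fun p : R * X => 0 <= fst p /\ D (snd p)) (locally (t, x)))
       (locally (V t x))) /\
  (forall t x, 0 <= t -> D x -> 0 <= V t x) /\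
  (forall t, 0 <= t -> V t zero = 0) /\
  exists (alpha2 kappa mu : R -> R) (r1 r2 : R),
    class_Kinf alpha2 /\ class_K kappa /\ pos_def mu /\ 0 < r1 /\ 0 < r2 /\
    (forall x, norm x <= r1 -> D x) /\
    (forall t x, 0 <= t -> D x -> x <> zero ->
       0 < V t x /\ V t x <= alpha2 (norm x)) /\
    (forall t x u, 0 <= t -> norm x <= r1 -> PC_input u -> input_norm u <= r2 ->
       norm x >= kappa (input_norm u) ->
       forall T phi, t < T -> mild_solution W Psi t x u T phi ->
         Rbar_le (lie_derivative V t x T phi) (Finite (- mu (V t x)))).

End Defs.

Definition V_W {X : CompleteNormedModule R_AbsRing} (W : R -> R -> X -> X)
  (t : R) (x : X) : R :=
  RInt_gen (fun tau => (norm (W tau t x)) ^ 2) (at_point t) (Rbar_locally p_infty).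

(* 0-UGAS of a linear evolution family is automatically exponential,
   |W(t,s)x| <= M e^(-w(t-s)) |x|, so V(t,x) = int_t^oo |W(tau,t)x|^2 dtau is finite, at most
   c|x|^2 with c = M^2/(2w), and Lipschitz in x with constant c(|y| + |z|).  By the cocycle
   property V(t,x) = int_t^(t+h) |W(tau,t)x|^2 dtau + V(t+h, W(t+h,t)x), so along the
   unperturbed flow V decreases at rate |x|^2.  A mild solution of (N) deviates from
   W(t+h,t)x by h times a bound on B u + psi, which by (H2) and the gain condition
   |x| >= kappa(|u|) is a small multiple of |x|; through the Lipschitz bound this changes V by a
   small multiple of h|x|^2, which the linear decrease dominates.  For x = 0 the gain condition
   forces u = 0, and the mild solution stays at 0. *)

From Stdlib Require Import Reals Lra Classical.
From Coquelicot Require Import Coquelicot.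
Open Scope R_scope.

(** * Improper integrals on [a, +oo) *)

Lemma filter_prod_at_point_p_infty (a B : R) (P : R * R -> Prop) :
  (forall b, B < b -> P (a, b)) ->
  filter_prod (at_point a) (Rbar_locally p_infty) P.
Proof.
  intros HP. apply Filter_prod with (fun x => x = a) (fun b => B < b).
  - reflexivity.
  - now exists B.
  - intros x y -> Hy. now apply HP.
Qed.

Lemma is_RInt_gen_p_infty_of_lim (f : R -> R) (a l : R) :
  (forall b, a <= b -> ex_RInt f a b) ->
  filterlim (fun b => RInt f a b) (Rbar_locally p_infty) (locally l) ->
  is_RInt_gen f (at_point a) (Rbar_locally p_infty) l.
Proof.
  intros Hex Hlim P [eps Heps].
  destruct (Hlim _ (locally_ball l eps)) as [B HB].
  apply (filter_prod_at_point_p_infty a (Rmax a B)). intros b Hb.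
  exists (RInt f a b). split.
  - apply (RInt_correct (V := R_CompleteNormedModule)), Hex.
    pose proof (Rmax_l a B); lra.
  - apply Heps, HB. pose proof (Rmax_r a B); lra.
Qed.

Lemma lim_p_infty_of_nondecreasing_bounded (F : R -> R) (a K : R) :
  (forall b b', a <= b -> b <= b' -> F b <= F b') ->
  (forall b, a <= b -> F b <= K) ->
  exists l, filterlim F (Rbar_locally p_infty) (locally l).
Proof.
  intros Hmono Hbnd.
  destruct (completeness (fun r => exists b, a <= b /\ r = F b)) as [l [Hub Hlub]].
  - exists K. intros r [b [Hb ->]]. now apply Hbnd.
  - exists (F a). exists a. split; [lra | reflexivity].
  - exists l. apply filterlim_locally. intros eps.
    assert (Hnear : exists b, a <= b /\ l - eps < F b).
    { apply NNPP. intros Hnone.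
      assert (l <= l - eps) by (apply Hlub; intros r [b [Hb ->]];
        apply Rnot_lt_le; intros Hlt; apply Hnone; now exists b).
      pose proof (cond_pos eps); lra. }
    destruct Hnear as [b0 [Hb0 Hlt]]. exists b0. intros b Hb.
    assert (F b0 <= F b) by (apply Hmono; lra).
    assert (F b <= l) by (apply Hub; exists b; split; [lra | reflexivity]).
    change (Rabs (F b - l) < eps). apply Rabs_def1; lra.
Qed.

Lemma RInt_monotone_upper (f : R -> R) (a b b' : R) :
  a <= b -> b <= b' -> ex_RInt f a b' -> (forall x, b < x < b' -> 0 <= f x) ->
  RInt f a b <= RInt f a b'.
Proof.
  intros Hab Hbb' Hex Hf.
  assert (Hex1 : ex_RInt f a b)
    by (apply (ex_RInt_Chasles_1 (V := R_CompleteNormedModule)) with b'; auto; lra).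
  assert (Hex2 : ex_RInt f b b')
    by (apply (ex_RInt_Chasles_2 (V := R_CompleteNormedModule)) with a; auto; lra).
  rewrite <- (RInt_Chasles (V := R_CompleteNormedModule) f a b b' Hex1 Hex2).
  pose proof (RInt_ge_0 f b b' Hbb' Hex2 Hf). simpl. unfold plus; simpl. lra.
Qed.

Lemma ex_RInt_gen_p_infty_of_bounded (f : R -> R) (a K : R) :
  (forall b, a <= b -> ex_RInt f a b) -> (forall x, a <= x -> 0 <= f x) ->
  (forall b, a <= b -> RInt f a b <= K) ->
  ex_RInt_gen f (at_point a) (Rbar_locally p_infty).
Proof.
  intros Hex Hf HK.
  destruct (lim_p_infty_of_nondecreasing_bounded (fun b => RInt f a b) a K)
    as [l Hl]; auto.
  - intros b b' Hb Hb'. apply RInt_monotone_upper; auto.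
    apply Hex; lra. intros; apply Hf; lra.
  - exists l. now apply is_RInt_gen_p_infty_of_lim.
Qed.

Lemma is_RInt_gen_p_infty_norm_le {V : CompleteNormedModule R_AbsRing}
  (f : R -> V) (g : R -> R) (a : R) (lf : V) (lg : R) :
  (forall x, a <= x -> norm (f x) <= g x) ->
  is_RInt_gen f (at_point a) (Rbar_locally p_infty) lf ->
  is_RInt_gen g (at_point a) (Rbar_locally p_infty) lg -> norm lf <= lg.
Proof.
  intros Hfg Hf Hg.
  apply (RInt_gen_norm (Fa := at_point a) (Fb := Rbar_locally p_infty) f g lf lg);
    auto; apply (filter_prod_at_point_p_infty a a).
  - intros b Hb; simpl; lra.
  - intros b Hb x [Hx _]. apply Hfg. exact Hx.
Qed.

Lemma is_RInt_exp_decay (C k a b : R) : 0 < k ->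
  is_RInt (fun tau => C * exp (-(k * (tau - a)))) a b
    (C / k * (1 - exp (-(k * (b - a))))).
Proof.
  intros Hk.
  set (F := fun tau => -(C / k) * exp (-(k * (tau - a)))).
  replace (C / k * (1 - exp (-(k * (b - a))))) with (minus (F b) (F a)).
  - apply (is_RInt_derive (V := R_CompleteNormedModule) F).
    + intros y _. unfold F. auto_derive; trivial. unfold Rminus. field. lra.
    + intros y _. apply continuity_pt_filterlim, derivable_continuous_pt. reg.
  - unfold F, minus, plus, opp; simpl.
    replace (-(k * (a - a))) with 0 by ring. rewrite exp_0. ring.
Qed.

Lemma is_lim_exp_decay (k a : R) : 0 < k ->
  is_lim (fun b => exp (-(k * (b - a)))) p_infty 0.
Proof.
  intros Hk.
  apply (is_lim_comp exp (fun b => -(k * (b - a))) p_infty 0 m_infty).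
  - exact is_lim_exp_m.
  - replace m_infty with (Rbar_opp (Rbar_mult k p_infty)).
    + apply is_lim_opp, is_lim_scal_l.
      apply (is_lim_minus _ _ _ p_infty a); [apply is_lim_id | apply is_lim_const |].
      now simpl.
    + simpl. destruct (Rle_dec 0 k) as [Hk'|]; [|lra].
      destruct (Rle_lt_or_eq_dec 0 k Hk'); [reflexivity | lra].
  - now exists 0.
Qed.

Lemma is_RInt_gen_exp_decay (C k a : R) : 0 < k ->
  is_RInt_gen (fun tau => C * exp (-(k * (tau - a)))) (at_point a)
    (Rbar_locally p_infty) (C / k).
Proof.
  intros Hk. apply is_RInt_gen_p_infty_of_lim.
  - intros b _. eexists. now apply is_RInt_exp_decay.
  - apply (filterlim_ext (fun b => C / k * (1 - exp (-(k * (b - a)))))).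
    + intros b. symmetry. apply is_RInt_unique. now apply is_RInt_exp_decay.
    + change (is_lim (fun b => C / k * (1 - exp (-(k * (b - a))))) p_infty (C / k)).
      replace (Finite (C / k)) with (Rbar_mult (C / k) (Rbar_minus 1 0))
        by (simpl; f_equal; ring).
      apply is_lim_scal_l, (is_lim_minus _ _ _ 1 0);
        [apply is_lim_const | now apply is_lim_exp_decay | now simpl].
Qed.

Lemma class_K_le (g : R -> R) (r s : R) : class_K g -> 0 <= r -> r <= s -> g r <= g s.
Proof.
  intros [_ [_ Hincr]] Hr [Hrs | ->]; [left; now apply Hincr | lra].
Qed.

Lemma class_KL_eventually_below (beta : R -> R -> R) (r eps : R) :
  class_KL beta -> 0 <= r -> 0 < eps -> exists T, 0 < T /\ beta r T <= eps.
Proof.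
  intros [_ HL] Hr Heps. destruct (HL r Hr) as [_ Hlim].
  destruct (Hlim (fun y => Rabs (y - 0) < eps)) as [T0 HT0].
  { now exists (mkposreal eps Heps). }
  exists (Rmax T0 0 + 1). split; [pose proof (Rmax_r T0 0); lra |].
  assert (H := HT0 (Rmax T0 0 + 1) ltac:(pose proof (Rmax_l T0 0); lra)).
  apply Rabs_def2 in H. lra.
Qed.

Lemma class_K_linear (k : R) : 0 < k -> class_K (fun r => k * r).
Proof.
  intros Hk. split; [ring | split].
  - intros r _. reg.
  - intros r s _ Hrs. apply Rmult_lt_compat_l; lra.
Qed.

Lemma class_Kinf_quadratic (k : R) : 0 < k -> class_Kinf (fun r => k * r ^ 2).
Proof.
  intros Hk. split; [split; [ring | split] |].
  - intros r _. reg.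
  - intros r s Hr Hrs. apply Rmult_lt_compat_l; [lra | simpl; nra].
  - intros B. exists (Rabs B / k + 1).
    assert (HBk : 0 <= Rabs B / k) by (apply Rdiv_le_0_compat; [apply Rabs_pos | lra]).
    split; [lra |].
    assert (Hlin : k * (Rabs B / k + 1) = Rabs B + k) by (field; lra).
    assert (k * (Rabs B / k + 1) <= k * (Rabs B / k + 1) ^ 2)
      by (apply Rmult_le_compat_l; [lra | simpl; nra]).
    pose proof (Rle_abs B). lra.
Qed.

Lemma pos_def_linear (k : R) : 0 < k -> pos_def (fun r => k * r).
Proof.
  intros Hk. split; [ring | split].
  - intros r _. reg.
  - intros r Hr. now apply Rmult_lt_0_compat.
Qed.

(** * Exponential stability of linear evolution families *)

Lemma linear_bound_of_unit_ball_bound {X Y : NormedModule R_AbsRing} (L : X -> Y) (K : R) :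
  is_linear L -> (forall y, norm y <= 1 -> norm (L y) <= K) ->
  forall x, norm (L x) <= K * norm x.
Proof.
  intros HL HK x.
  destruct (Req_dec (norm x) 0) as [Hx0 | Hx0].
  - apply norm_eq_zero in Hx0. subst x.
    rewrite (linear_zero L HL), !norm_zero. lra.
  - assert (Hx : 0 < norm x) by (pose proof (norm_ge_0 x); lra).
    assert (Hx_eq : x = scal (norm x) (scal (/ norm x) x)).
    { rewrite scal_assoc. change (mult (norm x) (/ norm x)) with (norm x * / norm x).
      rewrite Rinv_r by lra. symmetry; exact (scal_one x). }
    assert (Hunit : norm (scal (/ norm x) x) <= 1).
    { eapply Rle_trans; [apply (@norm_scal R_AbsRing) |].
      change (abs (/ norm x)) with (Rabs (/ norm x)).
      rewrite Rabs_pos_eq by (left; now apply Rinv_0_lt_compat).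
      rewrite Rinv_l by lra. lra. }
    rewrite Hx_eq at 1. rewrite (linear_scal L HL).
    eapply Rle_trans; [apply (@norm_scal R_AbsRing) |].
    change (abs (norm x)) with (Rabs (norm x)). rewrite Rabs_pos_eq by lra.
    rewrite Rmult_comm. apply Rmult_le_compat_r; [lra | now apply HK].
Qed.

Section ExponentialStability.

Context {X : NormedModule R_AbsRing} (W : R -> R -> X -> X).

Hypothesis W_cocycle :
  forall t r s x, 0 <= s -> s <= r -> r <= t -> W t s x = W t r (W r s x).

Lemma exponential_bound_of_half_contraction (G T : R) :
  0 <= G -> 0 < T ->
  (forall t s x, 0 <= s <= t -> t - s < T -> norm (W t s x) <= G * norm x) ->
  (forall s x, 0 <= s -> norm (W (s + T) s x) <= norm x / 2) ->
  forall t s x, 0 <= s <= t ->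
    norm (W t s x) <= 2 * G * exp (- (ln 2 / T * (t - s))) * norm x.
Proof.
  intros HG HT Hshort Hhalf.
  set (w := ln 2 / T).
  assert (Hw : 0 < w) by (apply Rdiv_lt_0_compat; [pose proof ln_lt_2 |]; lra).
  assert (Hexp_T : exp (- (w * T)) = / 2).
  { unfold w. replace (ln 2 / T * T) with (ln 2) by (field; lra).
    rewrite exp_Ropp, exp_ln; lra. }
  assert (Hwindows : forall n : nat, forall tau, 0 <= tau < INR n * T ->
            forall s x, 0 <= s ->
            norm (W (s + tau) s x) <= 2 * G * exp (- (w * tau)) * norm x).
  { induction n as [| n IH]; intros tau Htau s x Hs.
    - simpl in Htau. lra.
    - pose proof (norm_ge_0 x).
      destruct (Rlt_le_dec tau T) as [Hlt | Hge].
      + assert (/ 2 <= exp (- (w * tau))).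
        { rewrite <- Hexp_T. apply Rlt_le, exp_increasing. nra. }
        eapply Rle_trans; [apply Hshort; lra |].
        replace (s + tau - s) with tau by ring.
        apply Rmult_le_compat_r; [lra | nra].
      + rewrite (W_cocycle (s + tau) (s + T) s x) by lra.
        replace (s + tau) with (s + T + (tau - T)) by ring.
        eapply Rle_trans; [apply IH; [rewrite S_INR in Htau; lra | lra] |].
        replace (- (w * tau)) with (- (w * (tau - T)) + - (w * T)) by ring.
        rewrite exp_plus, Hexp_T.
        pose proof (exp_pos (- (w * (tau - T)))).
        pose proof (Hhalf s x Hs).
        assert (0 <= 2 * G * exp (- (w * (tau - T)))) by nra.
        nra. }
  intros t s x Hst.
  destruct (INR_unbounded ((t - s) / T)) as [n Hn].
  replace t with (s + (t - s)) at 1 by ring.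
  apply Hwindows with n; [| lra]. split; [lra |].
  apply Rmult_lt_reg_r with (/ T); [now apply Rinv_0_lt_compat |].
  rewrite Rmult_assoc, Rinv_r by lra. unfold Rdiv in Hn. lra.
Qed.

End ExponentialStability.

Lemma zero_UGAS_exponential_bound {X : CompleteNormedModule R_AbsRing}
  (W : R -> R -> X -> X) :
  (forall t s, 0 <= s <= t -> is_linear (W t s)) ->
  (forall t r s x, 0 <= s -> s <= r -> r <= t -> W t s x = W t r (W r s x)) ->
  zero_UGAS W ->
  exists M w, 0 < M /\ 0 < w /\
    forall t s x, 0 <= s <= t -> norm (W t s x) <= M * exp (- (w * (t - s))) * norm x.
Proof.
  intros Hlin Hcocycle [beta [HKL Hbeta]].
  pose proof HKL as [HK HL].
  assert (Hunit : forall t s x, 0 <= s <= t -> norm (W t s x) <= beta 1 (t - s) * norm x).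
  { intros t s x Hst. apply linear_bound_of_unit_ball_bound; [now apply Hlin |].
    intros y Hy. eapply Rle_trans; [apply Hbeta; lra |].
    apply (class_K_le (fun r => beta r (t - s))); [apply HK; lra | apply norm_ge_0 | exact Hy]. }
  assert (Hbeta_pos : 0 < beta 1 0).
  { destruct (HK 0 (Rle_refl 0)) as [H0 [_ Hincr]].
    rewrite <- H0 at 1. apply Hincr; lra. }
  destruct (class_KL_eventually_below beta 1 (/ 2) HKL) as [T [HT HbetaT]]; try lra.
  exists (2 * beta 1 0), (ln 2 / T).
  split; [lra |]. split; [apply Rdiv_lt_0_compat; [pose proof ln_lt_2 |]; lra |].
  apply (exponential_bound_of_half_contraction W Hcocycle (beta 1 0) T); [lra | exact HT | |].
  - intros t s x Hst _. eapply Rle_trans; [now apply Hunit |].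
    apply Rmult_le_compat_r; [apply norm_ge_0 |].
    apply (proj1 (HL 1 ltac:(lra))); lra.
  - intros s x Hs. eapply Rle_trans; [apply Hunit; lra |].
    replace (s + T - s) with T by ring. pose proof (norm_ge_0 x). nra.
Qed.

Lemma Rmult_div_succ_lt_half (K eps : R) : 0 <= K -> 0 < eps ->
  K * (eps / (2 * (K + 1))) < eps / 2.
Proof.
  intros HK Heps. apply Rmult_lt_reg_r with (2 * (K + 1)); [lra |].
  replace (K * (eps / (2 * (K + 1))) * (2 * (K + 1))) with (K * eps) by (field; lra).
  nra.
Qed.

Lemma Rabs_Rmax_sub_le (a b c : R) : Rabs (Rmax a c - Rmax b c) <= Rabs (a - b).
Proof.
  unfold Rmax. destruct (Rle_dec a c), (Rle_dec b c);
    unfold Rabs; repeat destruct Rcase_abs; lra.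
Qed.

Lemma norm_le_plus_minus {V : CompleteNormedModule R_AbsRing} (y z : V) :
  norm y <= norm z + norm (minus y z).
Proof.
  assert (H : Rabs (norm y - norm z) <= norm (minus y z)) by exact (norm_triangle_inv y z).
  pose proof (Rle_abs (norm y - norm z)). lra.
Qed.

Lemma continuous_of_time_continuous_lipschitz {X : NormedModule R_AbsRing}
  (F : R -> X -> R) (D : X -> Prop) (L t0 : R) (x0 : X) :
  0 <= L ->
  (forall eps, 0 < eps -> exists delta, 0 < delta /\ forall t, 0 <= t ->
     Rabs (t - t0) < delta -> Rabs (F t x0 - F t0 x0) < eps) ->
  (forall t y z, 0 <= t ->
     Rabs (F t y - F t z) <= L * (norm y + norm z) * norm (minus y z)) ->
  filterlim (fun p : R * X => F (fst p) (snd p))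
    (within (fun p : R * X => 0 <= fst p /\ D (snd p)) (locally (t0, x0)))
    (locally (F t0 x0)).
Proof.
  intros HL Htime Hlip. apply filterlim_locally. intros eps.
  pose proof (cond_pos eps) as Heps.
  destruct (Htime (eps / 2)) as [d1 [Hd1 Hnear]]; [lra |].
  set (n := norm x0). assert (Hn : 0 <= n) by apply norm_ge_0.
  set (nf := @norm_factor R_AbsRing X).
  assert (Hnf : 0 < nf) by apply norm_factor_gt_0.
  set (A := L * (2 * n + 1)). assert (HA : 0 <= A) by (unfold A; nra).
  set (r := Rmin 1 (eps / (2 * (A + 1)))).
  assert (Hr : 0 < r) by (apply Rmin_pos; [lra | apply Rdiv_lt_0_compat; lra]).
  assert (Hr1 : r <= 1) by apply Rmin_l.
  assert (Hr2 : A * r < eps / 2).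
  { eapply Rle_lt_trans; [| apply (Rmult_div_succ_lt_half A eps); lra].
    apply Rmult_le_compat_l; [lra | apply Rmin_r]. }
  assert (Hd : 0 < Rmin d1 (r / nf))
    by (apply Rmin_pos; [lra | apply Rdiv_lt_0_compat; lra]).
  exists (mkposreal _ Hd). intros [t y] [Hbt Hby] [Ht _].
  apply (@norm_compat2 R_AbsRing X x0 y (mkposreal _ Hd)) in Hby.
  simpl in *. change (Rabs (t - t0) < Rmin d1 (r / nf)) in Hbt.
  assert (Hy : norm (minus y x0) < r).
  { eapply Rlt_le_trans; [exact Hby |].
    apply Rle_trans with (nf * (r / nf)); [| right; field; lra].
    apply Rmult_le_compat_l; [lra | apply Rmin_r]. }
  assert (Hny : norm y <= n + 1).
  { unfold n. pose proof (norm_triangle_inv y x0).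
    pose proof (Rle_abs (norm y - norm x0)). lra. }
  change (Rabs (F t y - F t0 x0) < eps).
  replace (F t y - F t0 x0) with ((F t y - F t x0) + (F t x0 - F t0 x0)) by ring.
  eapply Rle_lt_trans; [apply Rabs_triang |].
  assert (Htx : Rabs (F t x0 - F t0 x0) < eps / 2).
  { apply Hnear; [exact Ht | eapply Rlt_le_trans; [exact Hbt | apply Rmin_l]]. }
  assert (Hty : Rabs (F t y - F t x0) <= A * r).
  { eapply Rle_trans; [apply Hlip; exact Ht |].
    unfold A, n in *. pose proof (norm_ge_0 (minus y x0)). pose proof (norm_ge_0 y).
    apply Rmult_le_compat; [apply Rmult_le_pos; lra | lra | | lra].
    apply Rmult_le_compat_l; lra. }
  lra.
Qed.

Lemma input_norm_bound {U : CompleteNormedModule R_AbsRing} (u : R -> U) :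
  PC_input u -> 0 <= input_norm u /\ forall s, 0 <= s -> norm (u s) <= input_norm u.
Proof.
  intros [[K HK] _]. unfold input_norm.
  set (E := fun r => exists t, 0 <= t /\ r = norm (u t)).
  destruct (Lub_Rbar_correct E) as [Hub Hlub].
  assert (Hfin : Rbar_le (Lub_Rbar E) K).
  { apply Hlub. intros r [t [Ht ->]]. now apply HK. }
  assert (Hmem : forall s, 0 <= s -> Rbar_le (norm (u s)) (Lub_Rbar E)).
  { intros s Hs. apply Hub. now exists s. }
  pose proof (Hmem 0 (Rle_refl 0)) as H0.
  destruct (Lub_Rbar E) as [l | |]; simpl in *; try contradiction.
  split; [pose proof (norm_ge_0 (u 0)); lra | exact Hmem].
Qed.

Lemma lie_derivative_le_of_quotients {X : CompleteNormedModule R_AbsRing} (V : R -> X -> R)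
  (t : R) (x : X) (T : R) (phi : R -> X) (r d : R) :
  0 < d <= T - t ->
  (forall h, 0 < h < d -> (V (t + h) (phi (t + h)) - V t x) / h <= r) ->
  Rbar_le (lie_derivative V t x T phi) r.
Proof.
  intros Hd Hq. unfold lie_derivative.
  set (E := fun q => exists h, 0 < h < d /\ q = (V (t + h) (phi (t + h)) - V t x) / h).
  assert (Hsup : Rbar_le (Lub_Rbar E) r).
  { apply (proj2 (Lub_Rbar_correct E)). intros q [h [Hh ->]]. now apply Hq. }
  assert (Hsup_fin : Rbar_le ((V (t + d / 2) (phi (t + d / 2)) - V t x) / (d / 2))
                       (Lub_Rbar E)).
  { apply (proj1 (Lub_Rbar_correct E)). exists (d / 2). split; [lra | reflexivity]. }
  destruct (Lub_Rbar E) as [l | |] eqn:HE; simpl in Hsup, Hsup_fin; try contradiction.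
  apply Rbar_le_trans with (Finite l); [| exact Hsup].
  apply (proj1 (Glb_Rbar_correct _)). exists d.
  split; [exact Hd | unfold E in HE; now rewrite HE].
Qed.

(** * The Lyapunov function *)

Definition orbit_sq {X : NormedModule R_AbsRing} (W : R -> R -> X -> X)
  (t : R) (x : X) (tau : R) : R :=
  norm (W tau t x) ^ 2.

Section QuadraticLyapunov.

Context {X : CompleteNormedModule R_AbsRing} (W : R -> R -> X -> X) (M w : R).

Hypothesis M_pos : 0 < M.
Hypothesis w_pos : 0 < w.
Hypothesis W_linear : forall t s, 0 <= s <= t -> is_linear (W t s).
Hypothesis W_id : forall s x, 0 <= s -> W s s x = x.
Hypothesis W_cocycle :
  forall t r s x, 0 <= s -> s <= r -> r <= t -> W t s x = W t r (W r s x).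
Hypothesis W_strong_cont : forall x t s, 0 <= s <= t ->
  filterlim (fun p : R * R => W (fst p) (snd p) x)
    (within (fun p : R * R => 0 <= snd p <= fst p) (locally (t, s)))
    (locally (W t s x)).
Hypothesis W_exp : forall t s x, 0 <= s <= t ->
  norm (W t s x) <= M * exp (- (w * (t - s))) * norm x.

Let c := M ^ 2 / (2 * w).

Lemma c_pos : 0 < c.
Proof. unfold c. apply Rdiv_lt_0_compat; [apply pow_lt |]; lra. Qed.

Lemma W_le : forall t s x, 0 <= s <= t -> norm (W t s x) <= M * norm x.
Proof.
  intros t s x Hst. eapply Rle_trans; [now apply W_exp |].
  apply Rmult_le_compat_r; [apply norm_ge_0 |].
  assert (exp (- (w * (t - s))) <= 1).
  { rewrite <- exp_0. destruct (Req_dec t s) as [-> | Hts].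
    - replace (- (w * (s - s))) with 0 by ring. lra.
    - apply Rlt_le, exp_increasing. nra. }
  pose proof (exp_pos (- (w * (t - s)))). nra.
Qed.

Lemma orbit_sq_le_exp (t : R) (x : X) (tau : R) : 0 <= t <= tau ->
  orbit_sq W t x tau <= M ^ 2 * norm x ^ 2 * exp (- (2 * w * (tau - t))).
Proof.
  intros Ht. unfold orbit_sq.
  replace (- (2 * w * (tau - t))) with (- (w * (tau - t)) + - (w * (tau - t)))
    by ring.
  rewrite exp_plus.
  replace (M ^ 2 * norm x ^ 2 * (exp (- (w * (tau - t))) * exp (- (w * (tau - t)))))
    with ((M * exp (- (w * (tau - t))) * norm x) ^ 2) by ring.
  apply pow_incr. split; [apply norm_ge_0 | now apply W_exp].
Qed.

Lemma W_orbit_continuous (t : R) (x : X) (tau0 : R) : 0 <= t ->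
  continuous (fun tau => W (Rmax tau t) t x) tau0.
Proof.
  intros Ht.
  assert (Hcont := W_strong_cont x (Rmax tau0 t) t
                     ltac:(split; [lra | apply Rmax_r])).
  apply filterlim_locally. intros eps.
  destruct (proj1 (filterlim_locally _ _) Hcont eps) as [d Hd].
  exists d. intros tau Htau. apply (Hd (Rmax tau t, t)).
  - split; [| apply ball_center].
    change (Rabs (Rmax tau t - Rmax tau0 t) < d).
    eapply Rle_lt_trans; [apply Rabs_Rmax_sub_le | exact Htau].
  - simpl. split; [lra | apply Rmax_r].
Qed.

Lemma ex_RInt_orbit_sq (t : R) (x : X) (a b : R) : 0 <= t -> t <= a -> a <= b ->
  ex_RInt (orbit_sq W t x) a b.
Proof.
  intros Ht Ha Hab.
  apply ex_RInt_ext with (fun tau => norm (W (Rmax tau t) t x) ^ 2).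
  { intros tau Htau. rewrite Rmin_left, Rmax_right in Htau by lra.
    unfold orbit_sq. now rewrite Rmax_left by lra. }
  apply (ex_RInt_continuous (V := R_CompleteNormedModule)). intros z _.
  apply (continuous_comp (fun tau => W (Rmax tau t) t x) (fun y : X => norm y ^ 2)).
  - now apply W_orbit_continuous.
  - apply (continuous_ext (fun y : X => mult (norm y) (norm y))).
    + intros y. unfold mult; simpl. ring.
    + apply (continuous_mult (K := R_AbsRing)); apply (@filterlim_norm R_AbsRing X).
Qed.

Lemma is_RInt_gen_V (t : R) (x : X) : 0 <= t ->
  is_RInt_gen (orbit_sq W t x) (at_point t) (Rbar_locally p_infty) (V_W W t x).
Proof.
  intros Ht. apply (RInt_gen_correct (V := R_CompleteNormedModule)).
  set (C := M ^ 2 * norm x ^ 2).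
  assert (HC : 0 <= C) by (apply Rmult_le_pos; apply pow2_ge_0).
  apply (ex_RInt_gen_p_infty_of_bounded _ t (C / (2 * w))).
  - intros b Hb. now apply ex_RInt_orbit_sq.
  - intros tau _. apply pow2_ge_0.
  - intros b Hb.
    assert (Hexp := is_RInt_exp_decay C (2 * w) t b ltac:(lra)).
    apply Rle_trans with (C / (2 * w) * (1 - exp (- (2 * w * (b - t))))).
    + rewrite <- (is_RInt_unique _ _ _ _ Hexp).
      apply RInt_le; [exact Hb | now apply ex_RInt_orbit_sq | eexists; exact Hexp |].
      intros tau Htau. apply orbit_sq_le_exp. lra.
    + pose proof (exp_pos (- (2 * w * (b - t)))).
      assert (0 <= C / (2 * w)) by (apply Rdiv_le_0_compat; lra). nra.
Qed.

Lemma V_bounds (t : R) (x : X) : 0 <= t -> 0 <= V_W W t x <= c * norm x ^ 2.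
Proof.
  intros Ht. pose proof (is_RInt_gen_V t x Ht) as HV.
  set (C := M ^ 2 * norm x ^ 2).
  assert (Hnonneg : norm (V_W W t x) <= V_W W t x).
  { apply (is_RInt_gen_p_infty_norm_le (orbit_sq W t x) (orbit_sq W t x) t); auto.
    intros tau _. apply Req_le, Rabs_pos_eq, pow2_ge_0. }
  assert (Hupper : norm (V_W W t x) <= C / (2 * w)).
  { apply (is_RInt_gen_p_infty_norm_le (orbit_sq W t x)
             (fun tau => C * exp (- (2 * w * (tau - t)))) t); auto.
    - intros tau Htau. change (Rabs (orbit_sq W t x tau) <= C * exp (- (2 * w * (tau - t)))).
      rewrite Rabs_pos_eq by apply pow2_ge_0. apply orbit_sq_le_exp. lra.
    - apply is_RInt_gen_exp_decay. lra. }
  pose proof (norm_ge_0 (V_W W t x)).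
  assert (Hc : C / (2 * w) = c * norm x ^ 2) by (unfold C, c; field; lra).
  change (norm (V_W W t x)) with (Rabs (V_W W t x)) in *.
  pose proof (Rle_abs (V_W W t x)). lra.
Qed.

Lemma orbit_sq_sub_le (s : R) (y z : X) (tau : R) : 0 <= s <= tau ->
  Rabs (orbit_sq W s y tau - orbit_sq W s z tau)
    <= M ^ 2 * (norm y + norm z) * norm (minus y z) * exp (- (2 * w * (tau - s))).
Proof.
  intros Hs. unfold orbit_sq.
  set (a := norm (W tau s y)). set (b := norm (W tau s z)).
  set (e := exp (- (w * (tau - s)))).
  assert (Ha : a <= M * e * norm y) by now apply W_exp.
  assert (Hb : b <= M * e * norm z) by now apply W_exp.
  assert (Hab : Rabs (a - b) <= M * e * norm (minus y z)).
  { eapply Rle_trans; [apply norm_triangle_inv |].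
    rewrite <- (linear_minus _ _ _ (W_linear tau s Hs)). now apply W_exp. }
  replace (- (2 * w * (tau - s))) with (- (w * (tau - s)) + - (w * (tau - s))) by ring.
  rewrite exp_plus. fold e.
  assert (0 <= a) by apply norm_ge_0. assert (0 <= b) by apply norm_ge_0.
  replace (a ^ 2 - b ^ 2) with ((a - b) * (a + b)) by ring.
  rewrite Rabs_mult, (Rabs_pos_eq (a + b)) by lra.
  replace (M ^ 2 * (norm y + norm z) * norm (minus y z) * (e * e))
    with ((M * e * norm (minus y z)) * (M * e * norm y + M * e * norm z)) by ring.
  apply Rmult_le_compat; [apply Rabs_pos | lra | exact Hab | lra].
Qed.

Lemma V_lipschitz (s : R) (y z : X) : 0 <= s ->
  Rabs (V_W W s y - V_W W s z) <= c * (norm y + norm z) * norm (minus y z).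
Proof.
  intros Hs.
  set (C := M ^ 2 * (norm y + norm z) * norm (minus y z)).
  assert (Hdiff := is_RInt_gen_minus (Fa := at_point s) (Fb := Rbar_locally p_infty)
                     _ _ _ _ (is_RInt_gen_V s y Hs) (is_RInt_gen_V s z Hs)).
  assert (H : norm (minus (V_W W s y) (V_W W s z)) <= C / (2 * w)).
  { apply (is_RInt_gen_p_infty_norm_le (V := R_CompleteNormedModule)
             (fun tau => minus (orbit_sq W s y tau) (orbit_sq W s z tau))
             (fun tau => C * exp (- (2 * w * (tau - s)))) s);
      [| exact Hdiff |].
    - intros tau Htau. apply (orbit_sq_sub_le s y z tau). lra.
    - apply is_RInt_gen_exp_decay. lra. }
  replace (c * (norm y + norm z) * norm (minus y z)) with (C / (2 * w))
    by (unfold C, c; field; lra).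
  exact H.
Qed.

Lemma V_split (t s : R) (x : X) : 0 <= t -> t <= s ->
  V_W W t x = RInt (orbit_sq W t x) t s + V_W W s (W s t x).
Proof.
  intros Ht Hts. unfold V_W at 1.
  apply (is_RInt_gen_unique (V := R_CompleteNormedModule)).
  change (RInt (orbit_sq W t x) t s + V_W W s (W s t x))
    with (plus (RInt (orbit_sq W t x) t s) (V_W W s (W s t x))).
  apply (is_RInt_gen_Chasles (V := R_NormedModule) _ s).
  - apply is_RInt_gen_at_point, (RInt_correct (V := R_CompleteNormedModule)).
    now apply ex_RInt_orbit_sq.
  - apply (is_RInt_gen_ext (orbit_sq W s (W s t x))); [| apply is_RInt_gen_V; lra].
    apply (filter_prod_at_point_p_infty s s). intros b Hb tau Htau. simpl in Htau.
    rewrite Rmin_left, Rmax_right in Htau by lra.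
    unfold orbit_sq. rewrite <- W_cocycle by lra. reflexivity.
Qed.

Lemma RInt_orbit_sq_bounds (t s : R) (x : X) : 0 <= t <= s ->
  0 <= RInt (orbit_sq W t x) t s <= (s - t) * (M ^ 2 * norm x ^ 2).
Proof.
  intros Hts. split.
  - apply RInt_ge_0; [lra | apply ex_RInt_orbit_sq; lra |].
    intros; apply pow2_ge_0.
  - rewrite <- (RInt_const (V := R_CompleteNormedModule)).
    apply RInt_le; [lra | apply ex_RInt_orbit_sq; lra | apply ex_RInt_const |].
    intros tau Htau. unfold orbit_sq.
    replace (M ^ 2 * norm x ^ 2) with ((M * norm x) ^ 2) by ring.
    apply pow_incr. split; [apply norm_ge_0 | apply W_le; lra].
Qed.

Lemma W_near_diagonal (t : R) (x : X) (eta : R) : 0 <= t -> 0 < eta ->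
  exists delta, 0 < delta /\ forall p q, 0 <= q <= p ->
    Rabs (p - t) < delta -> Rabs (q - t) < delta -> norm (minus (W p q x) x) < eta.
Proof.
  intros Ht Heta.
  assert (Hcont := W_strong_cont x t t ltac:(lra)). rewrite (W_id t x Ht) in Hcont.
  assert (Hnf := @norm_factor_gt_0 R_AbsRing X).
  destruct (proj1 (filterlim_locally _ _) Hcont
              (mkposreal (eta / norm_factor) (Rdiv_lt_0_compat _ _ Heta Hnf))) as [d Hd].
  exists d. split; [apply cond_pos |]. intros p q Hpq Hp Hq.
  assert (Hball := Hd (p, q) (conj Hp Hq) Hpq).
  apply (@norm_compat2 R_AbsRing X) in Hball. simpl in Hball.
  replace (norm_factor * (eta / norm_factor)) with eta in Hball by (field; lra).
  exact Hball.
Qed.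

Lemma orbit_sq_lower (t : R) (x : X) (eta : R) : 0 <= t -> 0 < eta <= norm x ->
  exists delta, 0 < delta /\ forall tau, t <= tau < t + delta ->
    (norm x - eta) ^ 2 <= orbit_sq W t x tau.
Proof.
  intros Ht Heta.
  destruct (W_near_diagonal t x eta Ht ltac:(lra)) as [d [Hd Hnear]].
  exists d. split; [exact Hd |]. intros tau Htau.
  assert (Hclose : norm (minus (W tau t x) x) < eta).
  { apply Hnear; [lra | rewrite Rabs_pos_eq; lra | rewrite Rminus_diag, Rabs_R0; lra]. }
  pose proof (norm_triangle_inv x (W tau t x)) as Htri.
  rewrite <- norm_opp, opp_minus in Hclose.
  pose proof (Rle_abs (norm x - norm (W tau t x))).
  unfold orbit_sq. apply pow_incr. lra.
Qed.

Lemma V_pos (t : R) (x : X) : 0 <= t -> x <> zero -> 0 < V_W W t x.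
Proof.
  intros Ht Hx.
  assert (Hn : 0 < norm x) by (apply norm_gt_0; exact Hx).
  destruct (orbit_sq_lower t x (norm x / 2) Ht ltac:(lra)) as [d [Hd Hlow]].
  rewrite (V_split t (t + d / 2) x) by lra.
  assert (Hint : d / 2 * (norm x / 2) ^ 2 <= RInt (orbit_sq W t x) t (t + d / 2)).
  { replace (d / 2) with (t + d / 2 - t) at 1 by ring.
    rewrite <- (RInt_const (V := R_CompleteNormedModule)).
    apply RInt_le; [lra | apply ex_RInt_const | apply ex_RInt_orbit_sq; lra |].
    intros tau Htau. replace (norm x / 2) with (norm x - norm x / 2) by field.
    apply Hlow. lra. }
  assert (0 < d / 2 * (norm x / 2) ^ 2) by (apply Rmult_lt_0_compat; [lra | apply pow_lt; lra]).
  pose proof (proj1 (V_bounds (t + d / 2) (W (t + d / 2) t x) ltac:(lra))).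
  lra.
Qed.

Lemma V_time_bound (t s : R) (x : X) : 0 <= t <= s ->
  Rabs (V_W W t x - V_W W s x)
    <= (s - t) * (M ^ 2 * norm x ^ 2) + c * (M + 1) * norm x * norm (minus (W s t x) x).
Proof.
  intros Hts.
  rewrite (V_split t s x) by lra.
  pose proof (RInt_orbit_sq_bounds t s x Hts) as [Hint0 Hint1].
  pose proof (V_lipschitz s (W s t x) x ltac:(lra)) as Hlip.
  assert (Hcoef : c * (norm (W s t x) + norm x) <= c * (M + 1) * norm x).
  { pose proof c_pos. pose proof (W_le s t x Hts). nra. }
  assert (Hlip' : Rabs (V_W W s (W s t x) - V_W W s x)
                    <= c * (M + 1) * norm x * norm (minus (W s t x) x)).
  { eapply Rle_trans; [exact Hlip |].
    apply Rmult_le_compat_r; [apply norm_ge_0 | exact Hcoef]. }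
  replace (RInt (orbit_sq W t x) t s + V_W W s (W s t x) - V_W W s x)
    with (RInt (orbit_sq W t x) t s + (V_W W s (W s t x) - V_W W s x)) by ring.
  eapply Rle_trans; [apply Rabs_triang |].
  rewrite Rabs_pos_eq by exact Hint0. lra.
Qed.

Lemma V_time_continuous (t0 : R) (x : X) : 0 <= t0 ->
  forall eps, 0 < eps -> exists delta, 0 < delta /\ forall t, 0 <= t ->
    Rabs (t - t0) < delta -> Rabs (V_W W t x - V_W W t0 x) < eps.
Proof.
  intros Ht0 eps Heps.
  set (K1 := M ^ 2 * norm x ^ 2). set (K2 := c * (M + 1) * norm x).
  assert (HK1 : 0 <= K1) by (apply Rmult_le_pos; apply pow2_ge_0).
  assert (HK2 : 0 <= K2).
  { pose proof c_pos. pose proof (norm_ge_0 x).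
    apply Rmult_le_pos; [apply Rmult_le_pos |]; lra. }
  destruct (W_near_diagonal t0 x (eps / (2 * (K2 + 1))) Ht0) as [dW [HdW Hnear]];
    [apply Rdiv_lt_0_compat; lra |].
  set (delta := Rmin dW (eps / (2 * (K1 + 1)))).
  assert (Hdelta : 0 < delta) by (apply Rmin_pos; [lra | apply Rdiv_lt_0_compat; lra]).
  assert (Hclose : forall q p, 0 <= q <= p -> p - q < delta ->
            Rabs (p - t0) < delta -> Rabs (q - t0) < delta ->
            Rabs (V_W W q x - V_W W p x) < eps).
  { intros q p Hqp Hpq Hp Hq.
    eapply Rle_lt_trans; [apply V_time_bound; exact Hqp |]. fold K1 K2.
    assert (Hdrift : (p - q) * K1 < eps / 2).
    { eapply Rle_lt_trans; [| now apply (Rmult_div_succ_lt_half K1)].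
      rewrite Rmult_comm. apply Rmult_le_compat_l; [lra |].
      assert (Hd := Rmin_r dW (eps / (2 * (K1 + 1)))). fold delta in Hd. lra. }
    assert (Hjump : K2 * norm (minus (W p q x) x) < eps / 2).
    { eapply Rle_lt_trans; [| now apply (Rmult_div_succ_lt_half K2)].
      apply Rmult_le_compat_l; [lra |].
      assert (Hd := Rmin_l dW (eps / (2 * (K1 + 1)))). fold delta in Hd.
      left. apply Hnear; lra. }
    lra. }
  exists delta. split; [exact Hdelta |]. intros t Ht Hdist.
  assert (Hdiag : Rabs (t0 - t0) < delta) by (rewrite Rminus_diag, Rabs_R0; exact Hdelta).
  destruct (Rle_dec t0 t) as [Hle | Hlt].
  - rewrite Rabs_minus_sym. apply Hclose; [lra | rewrite Rabs_pos_eq in Hdist | |]; lra.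
  - apply Hclose; [lra | rewrite Rabs_left in Hdist | |]; lra.
Qed.

Lemma V_continuous (D : X -> Prop) (t : R) (x : X) : 0 <= t ->
  filterlim (fun p : R * X => V_W W (fst p) (snd p))
    (within (fun p : R * X => 0 <= fst p /\ D (snd p)) (locally (t, x)))
    (locally (V_W W t x)).
Proof.
  intros Ht. apply (continuous_of_time_continuous_lipschitz _ D c).
  - left; exact c_pos.
  - now apply V_time_continuous.
  - intros s y z Hs. now apply V_lipschitz.
Qed.

(** * Mild solutions and the decrease of the Lyapunov function *)

Context {U : CompleteNormedModule R_AbsRing} (Psi : R -> X -> U -> X).

Lemma mild_solution_start (t : R) (x : X) (u : R -> U) (T : R) (phi : R -> X) :
  0 <= t < T -> mild_solution W Psi t x u T phi -> phi t = x.
Proof.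
  intros Ht [_ Hint]. specialize (Hint t (conj (Rle_refl t) (proj2 Ht))).
  assert (Hzero : minus (phi t) (W t t x) = zero).
  { rewrite <- (is_RInt_unique _ _ _ _ Hint).
    exact (is_RInt_unique _ _ _ _ (is_RInt_point _ t)). }
  rewrite (W_id t x (proj1 Ht)) in Hzero.
  apply (plus_reg_r (opp x)). now rewrite plus_opp_r.
Qed.

Lemma mild_solution_right_continuous (t : R) (x : X) (u : R -> U) (T : R) (phi : R -> X) :
  0 <= t < T -> mild_solution W Psi t x u T phi ->
  forall eta, 0 < eta -> exists d, 0 < d /\ forall s, t <= s < T -> s - t < d ->
    norm (minus (phi s) x) < eta.
Proof.
  intros Ht Hmild eta Heta.
  rewrite <- (mild_solution_start t x u T phi Ht Hmild).
  destruct Hmild as [Hcont _]. specialize (Hcont t (conj (Rle_refl t) (proj2 Ht))).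
  assert (Hnf := @norm_factor_gt_0 R_AbsRing X).
  destruct (proj1 (filterlim_locally _ _) Hcont
              (mkposreal (eta / norm_factor) (Rdiv_lt_0_compat _ _ Heta Hnf))) as [d Hd].
  exists d. split; [apply cond_pos |]. intros s Hs Hsd.
  assert (Hball : ball t d s) by (change (Rabs (s - t) < d); rewrite Rabs_pos_eq; lra).
  assert (Hnorm := @norm_compat2 R_AbsRing X _ _ _ (Hd s Hball Hs)). simpl in Hnorm.
  replace (norm_factor * (eta / norm_factor)) with eta in Hnorm by (field; lra).
  exact Hnorm.
Qed.

Lemma mild_solution_deviation (t : R) (x : X) (u : R -> U) (T : R) (phi : R -> X)
  (tau P : R) :
  0 <= t -> mild_solution W Psi t x u T phi -> t <= tau < T ->
  (forall r, t <= r <= tau -> norm (Psi r (phi r) (u r)) <= P) ->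
  norm (minus (phi tau) (W tau t x)) <= (tau - t) * (M * P).
Proof.
  intros Ht [_ Hint] Htau HP.
  apply (norm_RInt_le_const (fun s => W tau s (Psi s (phi s) (u s))) t tau); [lra | |].
  - intros r Hr. eapply Rle_trans; [apply W_le; lra |].
    apply Rmult_le_compat_l; [lra | now apply HP].
  - now apply Hint.
Qed.

Variables a b rho : R.
Hypothesis a_nonneg : 0 <= a.
Hypothesis b_nonneg : 0 <= b.
Hypothesis rho_pos : 0 < rho.
Hypothesis Psi_growth : forall r y v, 0 <= r -> norm y <= rho -> norm v <= rho ->
  norm (Psi r y v) <= a * norm y + b * norm v.

Lemma mild_solution_from_zero_le (t : R) (u : R -> U) (T : R) (phi : R -> X) (s m : R) :
  0 <= t -> mild_solution W Psi t zero u T phi -> (forall r, 0 <= r -> u r = zero) ->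
  t <= s < T -> m <= rho -> (forall r, t <= r <= s -> norm (phi r) <= m) ->
  norm (phi s) <= (s - t) * (M * (a * m)).
Proof.
  intros Ht Hmild Hu Hs Hm Hphi.
  assert (Hdev := mild_solution_deviation t zero u T phi s (a * m) Ht Hmild Hs).
  assert (HW0 : W s t zero = zero) by exact (linear_zero _ (W_linear s t ltac:(lra))).
  assert (Hnorm0 : norm (minus (phi s) (zero : X)) = norm (phi s))
    by exact (f_equal norm (minus_zero_r (phi s))).
  rewrite HW0, Hnorm0 in Hdev. apply Hdev.
  intros r Hr. rewrite (Hu r) by lra.
  assert (Hz : norm (zero : U) = 0) by exact norm_zero.
  pose proof (Hphi r Hr).
  eapply Rle_trans; [apply Psi_growth; [lra | lra | rewrite Hz; lra] |].
  rewrite Hz. nra.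
Qed.

Lemma mild_solution_vanishes_from_zero (t : R) (u : R -> U) (T : R) (phi : R -> X) :
  0 <= t < T -> mild_solution W Psi t zero u T phi -> (forall s, 0 <= s -> u s = zero) ->
  exists d, 0 < d <= T - t /\ forall s, t <= s < t + d -> phi s = zero.
Proof.
  intros Ht Hmild Hu.
  destruct (mild_solution_right_continuous t zero u T phi Ht Hmild rho rho_pos)
    as [d1 [Hd1 Hnear]].
  set (d := Rmin (Rmin (d1 / 2) ((T - t) / 2)) (/ (2 * M * (a + 1)))).
  assert (Hd : 0 < d) by (apply Rmin_pos; [apply Rmin_pos |]; try lra;
                          apply Rinv_0_lt_compat; nra).
  assert (Hdd1 : d <= d1 / 2) by (eapply Rle_trans; [apply Rmin_l | apply Rmin_l]).
  assert (HdT : d <= (T - t) / 2) by (eapply Rle_trans; [apply Rmin_l | apply Rmin_r]).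
  assert (Hgain : d * (M * a) <= / 2).
  { apply Rle_trans with (/ (2 * M * (a + 1)) * (M * a)).
    - apply Rmult_le_compat_r; [nra | apply Rmin_r].
    - apply Rmult_le_reg_l with (2 * M * (a + 1)); [nra |].
      rewrite <- Rmult_assoc, Rinv_r by nra. nra. }
  assert (Hsmall : forall s, t <= s <= t + d -> norm (phi s) <= rho).
  { intros s Hs. rewrite <- (minus_zero_r (phi s)). left. apply Hnear; lra. }
  (* With [m] the sup of [|phi|] on [t, t + d], the integral equation gives [m <= m / 2]. *)
  destruct (completeness (fun r => exists s, t <= s <= t + d /\ r = norm (phi s)))
    as [m [Hub Hlub]].
  { exists rho. intros r [s [Hs ->]]. now apply Hsmall. }
  { exists (norm (phi t)), t. split; [lra | reflexivity]. }
  assert (Hle_m : forall s, t <= s <= t + d -> norm (phi s) <= m)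
    by (intros s Hs; apply Hub; now exists s).
  assert (Hm0 : 0 <= m) by (pose proof (norm_ge_0 (phi t)); pose proof (Hle_m t ltac:(lra)); lra).
  assert (Hm_rho : m <= rho) by (apply Hlub; intros r [s [Hs ->]]; now apply Hsmall).
  assert (Hhalf : m <= m / 2).
  { apply Hlub. intros r [s [Hs ->]].
    eapply Rle_trans.
    - apply (mild_solution_from_zero_le t u T phi s m (proj1 Ht) Hmild Hu); [lra | lra |].
      intros r Hr. apply Hle_m. lra.
    - assert ((s - t) * (M * a) <= d * (M * a)) by (apply Rmult_le_compat_r; nra).
      replace ((s - t) * (M * (a * m))) with ((s - t) * (M * a) * m) by ring. nra. }
  exists d. split; [lra |]. intros s Hs.
  assert (Hn : norm (phi s) = 0)
    by (pose proof (norm_ge_0 (phi s)); pose proof (Hle_m s ltac:(lra)); lra).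
  exact (norm_eq_zero (phi s) Hn).
Qed.

Let L := c * M * (M + 2).

Hypothesis a_small : 8 * L * a <= 1.

Lemma L_pos : 0 < L.
Proof. unfold L. pose proof c_pos. apply Rmult_lt_0_compat; [apply Rmult_lt_0_compat |]; lra. Qed.

Lemma Psi_le_of_gain (r n e : R) (y : X) (v : U) :
  0 <= r -> norm y <= 2 * n <= rho -> norm v <= e <= rho -> 8 * L * b * e <= n ->
  norm (Psi r y v) <= 3 * n / (8 * L).
Proof.
  intros Hr Hy Hv Hgain. pose proof L_pos as HL.
  pose proof (norm_ge_0 y). pose proof (norm_ge_0 v).
  eapply Rle_trans; [apply Psi_growth; lra |].
  assert (Ha : 8 * L * (a * norm y) <= 2 * n).
  { assert (a * norm y <= a * (2 * n)) by (apply Rmult_le_compat_l; lra). nra. }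
  assert (Hb : 8 * L * (b * norm v) <= n).
  { assert (b * norm v <= b * e) by (apply Rmult_le_compat_l; lra). nra. }
  apply Rmult_le_reg_l with (8 * L); [lra |].
  replace (8 * L * (3 * n / (8 * L))) with (3 * n) by (field; lra). lra.
Qed.

Lemma V_sub_le_of_deviation (tau h n : R) (y z : X) :
  0 <= tau -> 0 <= h -> norm y <= 2 * n -> norm z <= M * n ->
  norm (minus y z) <= h * (M * (3 * n / (8 * L))) ->
  V_W W tau y - V_W W tau z <= 3 * h * n ^ 2 / 8.
Proof.
  intros Htau Hh Hy Hz Hdev. pose proof L_pos. pose proof c_pos.
  pose proof (norm_ge_0 y). pose proof (norm_ge_0 z). pose proof (norm_ge_0 (minus y z)).
  assert (Hprod : c * (norm y + norm z) * norm (minus y z)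
                    <= c * ((M + 2) * n) * (h * (M * (3 * n / (8 * L))))).
  { apply Rmult_le_compat; [nra | lra | | exact Hdev].
    apply Rmult_le_compat_l; lra. }
  replace (3 * h * n ^ 2 / 8) with (c * ((M + 2) * n) * (h * (M * (3 * n / (8 * L)))))
    by (unfold L; field; lra).
  pose proof (V_lipschitz tau y z Htau).
  pose proof (Rle_abs (V_W W tau y - V_W W tau z)). lra.
Qed.

(* Over a step [h] the perturbation moves [V] by at most [3 h |x|^2 / 8] while the integral
   term of [V_split] removes at least [9 h |x|^2 / 16]. *)
Lemma lie_derivative_V_le (t : R) (x : X) (u : R -> U) (e T : R) (phi : R -> X) :
  0 <= t < T -> 0 < norm x <= rho / 2 ->
  0 <= e <= rho -> (forall s, 0 <= s -> norm (u s) <= e) -> 8 * L * b * e <= norm x ->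
  mild_solution W Psi t x u T phi ->
  Rbar_le (lie_derivative (V_W W) t x T phi) (- (norm x ^ 2 / 8)).
Proof.
  intros Ht Hx He Hu Hgain Hmild.
  destruct (mild_solution_right_continuous t x u T phi Ht Hmild (norm x) ltac:(lra))
    as [d1 [Hd1 Hnear]].
  destruct (orbit_sq_lower t x (norm x / 4) (proj1 Ht) ltac:(lra)) as [d2 [Hd2 Hlow]].
  set (d := Rmin (Rmin d1 d2) (T - t)).
  assert (Hdd1 : d <= d1) by (eapply Rle_trans; [apply Rmin_l | apply Rmin_l]).
  assert (Hdd2 : d <= d2) by (eapply Rle_trans; [apply Rmin_l | apply Rmin_r]).
  assert (HdT : d <= T - t) by apply Rmin_r.
  assert (Hd : 0 < d) by (apply Rmin_pos; [apply Rmin_pos |]; lra).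
  apply (lie_derivative_le_of_quotients _ _ _ _ _ _ d); [lra |].
  intros h Hh.
  assert (Hphi : forall r, t <= r <= t + h -> norm (phi r) <= 2 * norm x).
  { intros r Hr. pose proof (norm_le_plus_minus (phi r) x).
    pose proof (Hnear r ltac:(lra) ltac:(lra)). lra. }
  assert (Hdev : norm (minus (phi (t + h)) (W (t + h) t x))
                   <= h * (M * (3 * norm x / (8 * L)))).
  { replace (h * (M * (3 * norm x / (8 * L))))
      with ((t + h - t) * (M * (3 * norm x / (8 * L)))) by ring.
    apply (mild_solution_deviation t x u T phi); [lra | exact Hmild | lra |].
    intros r Hr. apply (Psi_le_of_gain r (norm x) e); [lra | split | split |]; try lra.
    - now apply Hphi.
    - apply Hu; lra. }
  assert (Hperturb := V_sub_le_of_deviation (t + h) h (norm x) _ _ ltac:(lra) ltac:(lra)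
                        (Hphi (t + h) ltac:(lra)) (W_le (t + h) t x ltac:(lra)) Hdev).
  assert (Hdecay : h * (3 * norm x / 4) ^ 2 <= RInt (orbit_sq W t x) t (t + h)).
  { replace h with (t + h - t) at 1 by ring.
    rewrite <- (RInt_const (V := R_CompleteNormedModule)).
    apply RInt_le; [lra | apply ex_RInt_const | apply ex_RInt_orbit_sq; lra |].
    intros r Hr. replace (3 * norm x / 4) with (norm x - norm x / 4) by field.
    apply Hlow. lra. }
  rewrite (V_split t (t + h) x) by lra.
  apply Rmult_le_reg_l with h; [lra |].
  unfold Rdiv at 1.
  rewrite <- Rmult_assoc, (Rmult_comm h), Rmult_assoc, Rinv_r, Rmult_1_r by lra.
  nra.
Qed.

Lemma V_zero (t : R) : 0 <= t -> V_W W t zero = 0.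
Proof.
  intros Ht. pose proof (V_bounds t zero Ht) as HV.
  assert (Hz : norm (zero : X) = 0) by exact norm_zero.
  rewrite Hz in HV. lra.
Qed.

Lemma lie_derivative_V_at_zero (t : R) (u : R -> U) (T : R) (phi : R -> X) :
  0 <= t < T -> mild_solution W Psi t zero u T phi -> (forall s, 0 <= s -> u s = zero) ->
  Rbar_le (lie_derivative (V_W W) t zero T phi) 0.
Proof.
  intros Ht Hmild Hu.
  destruct (mild_solution_vanishes_from_zero t u T phi Ht Hmild Hu) as [d [Hd Hphi]].
  apply (lie_derivative_le_of_quotients _ _ _ _ _ _ d Hd). intros h Hh.
  rewrite Hphi, !V_zero by lra. unfold Rdiv. rewrite Rminus_diag, Rmult_0_l. lra.
Qed.

Theorem V_nc_LISS_Lyapunov : nc_LISS_Lyapunov_impl W Psi (fun _ => True) (V_W W).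
Proof.
  pose proof c_pos as Hc. pose proof L_pos as HL.
  set (K := 8 * L * b + 1).
  assert (HK : 0 < K) by (unfold K; nra).
  split; [exact I | split; [intros x _; exists 1; split; [lra | easy] | split]].
  { intros t x Ht _. exact (V_continuous (fun _ => True) t x Ht). }
  split; [intros t x Ht _; now apply V_bounds |].
  split; [exact V_zero |].
  exists (fun r => c * r ^ 2), (fun r => K * r), (fun r => / (8 * c) * r), (rho / 2), rho.
  split; [now apply class_Kinf_quadratic |].
  split; [now apply class_K_linear |].
  split; [apply pos_def_linear, Rinv_0_lt_compat; lra |].
  split; [lra | split; [exact rho_pos | split; [easy | split]]].
  { intros t x Ht _ Hx. split; [now apply V_pos | now apply V_bounds]. }
  intros t x u Ht Hx Hu Hur Hkappa T phi HT Hmild.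
  destruct (input_norm_bound u Hu) as [He Hue].
  destruct (Req_dec (norm x) 0) as [Hx0 | Hx0].
  - assert (Hu0 : forall s, 0 <= s -> u s = zero).
    { intros s Hs. apply (norm_eq_zero (u s)).
      pose proof (Hue s Hs). pose proof (norm_ge_0 (u s)). nra. }
    rewrite (norm_eq_zero x Hx0) in *.
    rewrite V_zero, Rmult_0_r, Ropp_0 by lra.
    now apply (lie_derivative_V_at_zero t u T phi).
  - eapply Rbar_le_trans.
    + cbv beta in Hkappa. unfold K in Hkappa. pose proof (norm_ge_0 x).
      apply (lie_derivative_V_le t x u (input_norm u)); try lra; try assumption.
    + simpl. pose proof (V_bounds t x Ht).
      apply Ropp_le_contravar.
      apply Rmult_le_reg_l with (8 * c); [lra |].
      rewrite <- Rmult_assoc, Rinv_r by lra. nra.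
Qed.

End QuadraticLyapunov.

Theorem mainTheorem12 (X U : CompleteNormedModule R_AbsRing)
  (DA : R -> X -> Prop) (A : R -> X -> X) (W : R -> R -> X -> X)
  (B : R -> U -> X) (psi : R -> X -> U -> X) :
  evolution_family DA A W ->
  B_cont_bounded B ->
  H1 (fun t x v => plus (B t v) (psi t x v)) ->
  H2 psi ->
  zero_UGAS W ->
  nc_LISS_Lyapunov_impl W (fun t x v => plus (B t v) (psi t x v))
    (fun _ => True) (V_W W).
Proof.
  (* (H1) and the generator only serve to produce mild solutions; the estimate holds for
     every mild solution. *)
  intros [_ [Hlin [Hid [Hcocycle [Hcont _]]]]] [_ [_ [MB HMB]]] _ Hpsi HUGAS.
  destruct (zero_UGAS_exponential_bound W Hlin Hcocycle HUGAS) as [M [w [HM [Hw Hexp]]]].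
  set (L := M ^ 2 / (2 * w) * M * (M + 2)).
  assert (HL : 0 < L).
  { unfold L. apply Rmult_lt_0_compat; [apply Rmult_lt_0_compat |]; try lra.
    apply Rdiv_lt_0_compat; [apply pow_lt |]; lra. }
  set (a := / (8 * L)).
  destruct (Hpsi a) as [b [rho [Hb [Hrho Hpsi_small]]]]; [apply Rinv_0_lt_compat; lra |].
  apply (V_nc_LISS_Lyapunov W M w HM Hw Hlin Hid Hcocycle Hcont Hexp _ a (Rmax MB 0 + b) rho).
  - left. apply Rinv_0_lt_compat. lra.
  - pose proof (Rmax_r MB 0). lra.
  - exact Hrho.
  - intros r y v Hr Hy Hv.
    assert (norm (plus (B r v) (psi r y v)) <= norm (B r v) + norm (psi r y v))
      by exact (norm_triangle _ _).
    pose proof (HMB r Hr v). pose proof (Hpsi_small r y v Hr Hy Hv).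
    assert (MB * norm v <= Rmax MB 0 * norm v)
      by (apply Rmult_le_compat_r; [apply norm_ge_0 | apply Rmax_l]).
    lra.
  - fold L. unfold a. rewrite Rinv_r; lra.
Qed.
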